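(* Let $N\ge5$. Define $s(r)=\left((N-2)\int_r^\infty(\sinh\sigma)^{1-N}d\sigma\right)^{-\frac{1}{N-2}}$ for $r>0$, let $r=r(s)$ be its inverse and $\rho(s)=\left(\frac{\sinh r(s)}{s}\right)^{2(N-1)}$. If $A\in\mathbb{R}$ is such that $$\int_0^\infty\frac{1}{\rho(s)}(\Delta v)^2s^{N-1}ds\ge\frac{(N-1)^4}{16}\int_0^\infty\rho(s)v^2s^{N-1}ds+A\int_0^\infty\frac{\rho(s)}{r^2(s)}v^2s^{N-1}ds$$ for every $v\in C_c^\infty(0,\infty)$, where $\Delta v=v''+\frac{N-1}{s}v'$, then $A\le\frac{(N-1)^2}{8}$. *)

From Stdlib Require Import Reals ClassicalEpsilon.
From Coquelicot Require Import Coquelicot.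
Open Scope R_scope.

Definition s_of_r (N : nat) (r : R) : R :=
  Rpower ((INR N - 2) *
          RInt_gen (fun sigma => / (sinh sigma ^ (N - 1)))
                   (at_point r) (Rbar_locally p_infty))
         (- (1 / (INR N - 2))).

Definition r_of_s (N : nat) (s : R) : R :=
  epsilon (inhabits 0) (fun r => 0 < r /\ s_of_r N r = s).

Definition rho (N : nat) (s : R) : R := (sinh (r_of_s N s) / s) ^ (2 * (N - 1)).

Definition radial_lap (N : nat) (v : R -> R) (s : R) : R :=
  Derive_n v 2 s + (INR N - 1) / s * Derive v s.

Definition smooth_cc_pos (v : R -> R) : Prop :=
  (forall (k : nat) (x : R), ex_derive (Derive_n v k) x) /\
  (exists a b : R, 0 < a /\ a < b /\ forall x, (x < a \/ b < x) -> v x = 0).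

Definition int_0_oo (f : R -> R) : R :=
  RInt_gen f (at_right 0) (Rbar_locally p_infty).

(* Substitute s = s(r).  Since ds/dr = (s / sinh r)^(N-1), the measure rho(s) s^(N-1) ds
   becomes sinh(r)^(N-1) dr, and the radial Laplacian of v(s) = Phi(r(s)) is rho(s) times the
   hyperbolic radial Laplacian Phi'' + (N-1) coth(r) Phi'.  Take
   Phi(r) = sinh(r)^(-m) sqrt(r) psi(ln r / L), m = (N-1)/2, with psi a bump supported in [1,2].
   The first-order terms in psi cancel, and after t = ln r / L the defect of the inequality,
   integrated, is at most L (m^2/2 - A) int psi^2 plus a constant independent of L.  Letting
   L -> oo forces A <= m^2/2 = (N-1)^2/8. *)

From Stdlib Require Import Reals Lra Lia ClassicalEpsilon.
From Coquelicot Require Import Coquelicot.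
Open Scope R_scope.

(** * Smoothness on open sets *)

Definition derivable_upto (n : nat) (U : R -> Prop) (f : R -> R) : Prop :=
  forall k, (k < n)%nat -> forall x, U x -> ex_derive (Derive_n f k) x.

Definition smooth_on (U : R -> Prop) (f : R -> R) : Prop :=
  forall n, derivable_upto n U f.

Lemma Derive_n_Derive (f : R -> R) k : Derive_n (Derive f) k = Derive_n f (S k).
Proof. induction k as [|k IH]; simpl; [reflexivity | now rewrite IH]. Qed.

Section DerivableUpto.

Variable U : R -> Prop.
Hypothesis U_open : open U.

Lemma derivable_upto_le n m f :
  (m <= n)%nat -> derivable_upto n U f -> derivable_upto m U f.
Proof. now intros Hmn Hf k Hk; apply Hf; lia. Qed.

Lemma derivable_upto_0 f : derivable_upto 0 U f.
Proof. now intros k Hk; lia. Qed.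

Lemma derivable_upto_S n f :
  derivable_upto (S n) U f <->
  (forall x, U x -> ex_derive f x) /\ derivable_upto n U (Derive f).
Proof.
  split.
  - intros Hf; split.
    + now apply (Hf 0%nat); lia.
    + intros k Hk x Hx; rewrite Derive_n_Derive; apply (Hf (S k)); [lia | exact Hx].
  - intros [Hf1 Hf2] [|k] Hk x Hx; [exact (Hf1 x Hx) |].
    rewrite <- Derive_n_Derive; apply Hf2; [lia | exact Hx].
Qed.

Lemma locally_eq_on_open (f g : R -> R) x :
  (forall y, U y -> f y = g y) -> U x -> locally x (fun y => f y = g y).
Proof. now intros Hfg Hx; apply (locally_open U); auto. Qed.

Lemma derivable_upto_ext n f g :
  (forall y, U y -> f y = g y) -> derivable_upto n U f -> derivable_upto n U g.
Proof.
  intros Hfg Hf k Hk x Hx.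
  apply ex_derive_ext_loc with (Derive_n f k); [| now apply Hf].
  apply (locally_open U); [exact U_open | | exact Hx].
  intros y Hy; apply Derive_n_ext_loc, locally_eq_on_open; auto.
Qed.

Lemma derivable_upto_const n c : derivable_upto n U (fun _ => c).
Proof.
  revert c; induction n as [|n IH]; intros c; [apply derivable_upto_0 |].
  apply derivable_upto_S; split; [intros; apply ex_derive_const |].
  apply derivable_upto_ext with (fun _ => 0); [intros; symmetry; apply Derive_const | apply IH].
Qed.

Lemma derivable_upto_id n : derivable_upto n U (fun x => x).
Proof.
  destruct n as [|n]; [apply derivable_upto_0 |].
  apply derivable_upto_S; split; [intros; apply ex_derive_id |].
  apply derivable_upto_ext with (fun _ => 1);
    [intros; symmetry; apply Derive_id | apply derivable_upto_const].
Qed.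

Lemma derivable_upto_plus n f g :
  derivable_upto n U f -> derivable_upto n U g ->
  derivable_upto n U (fun x => f x + g x).
Proof.
  revert f g; induction n as [|n IH]; intros f g Hf Hg; [apply derivable_upto_0 |].
  apply derivable_upto_S in Hf as [Hf1 Hf2], Hg as [Hg1 Hg2].
  apply derivable_upto_S; split; [intros; apply (ex_derive_plus f g); auto |].
  apply derivable_upto_ext with (fun x => Derive f x + Derive g x); auto.
  intros; symmetry; apply Derive_plus; auto.
Qed.

Lemma derivable_upto_mult n f g :
  derivable_upto n U f -> derivable_upto n U g ->
  derivable_upto n U (fun x => f x * g x).
Proof.
  revert f g; induction n as [|n IH]; intros f g Hf Hg; [apply derivable_upto_0 |].
  pose proof (derivable_upto_le (S n) n f ltac:(lia) Hf) as Hf0.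
  pose proof (derivable_upto_le (S n) n g ltac:(lia) Hg) as Hg0.
  apply derivable_upto_S in Hf as [Hf1 Hf2], Hg as [Hg1 Hg2].
  apply derivable_upto_S; split; [intros; apply (ex_derive_mult f g); auto |].
  apply derivable_upto_ext with (fun x => Derive f x * g x + f x * Derive g x).
  - intros; symmetry; apply Derive_mult; auto.
  - apply derivable_upto_plus; auto.
Qed.

Lemma derivable_upto_scal n k f :
  derivable_upto n U f -> derivable_upto n U (fun x => k * f x).
Proof. intros; apply derivable_upto_mult; auto using derivable_upto_const. Qed.

Lemma derivable_upto_minus n f g :
  derivable_upto n U f -> derivable_upto n U g ->
  derivable_upto n U (fun x => f x - g x).
Proof.
  intros Hf Hg; apply derivable_upto_ext with (fun x => f x + -1 * g x).
  - intros; ring.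
  - auto using derivable_upto_plus, derivable_upto_scal.
Qed.

Lemma derivable_upto_pow n f k :
  derivable_upto n U f -> derivable_upto n U (fun x => f x ^ k).
Proof.
  intros Hf; induction k as [|k IH]; [exact (derivable_upto_const n 1) |].
  apply derivable_upto_mult; auto.
Qed.

Lemma derivable_upto_Derive_n n k f :
  derivable_upto (n + k) U f -> derivable_upto n U (Derive_n f k).
Proof.
  intros Hf j Hj x Hx.
  apply ex_derive_ext with (Derive_n f (j + k)); [intros; now rewrite Derive_n_comp |].
  apply Hf; [lia | exact Hx].
Qed.

Lemma derivable_upto_continuous n k f x :
  derivable_upto n U f -> (k < n)%nat -> U x -> continuous (Derive_n f k) x.
Proof. intros Hf Hk Hx; apply (ex_derive_continuous (Derive_n f k)), Hf; auto. Qed.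

Lemma derivable_upto_subset n V f :
  (forall x, U x -> V x) -> derivable_upto n V f -> derivable_upto n U f.
Proof. now intros HUV Hf k Hk x Hx; apply Hf, HUV. Qed.

End DerivableUpto.

Lemma derivable_upto_comp n U V f g :
  open U -> (forall x, U x -> V (g x)) ->
  derivable_upto n V f -> derivable_upto n U g ->
  derivable_upto n U (fun x => f (g x)).
Proof.
  intros HU HV; revert f g HV.
  induction n as [|n IH]; intros f g HV Hf Hg; [apply derivable_upto_0 |].
  pose proof (derivable_upto_le U (S n) n g ltac:(lia) Hg) as Hg0.
  apply derivable_upto_S in Hf as [Hf1 Hf2], Hg as [Hg1 Hg2].
  apply derivable_upto_S; split; [intros; apply (ex_derive_comp f g); auto |].
  apply derivable_upto_ext with (fun x => Derive g x * Derive f (g x)); auto.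
  - intros; symmetry; apply Derive_comp; auto.
  - apply derivable_upto_mult; auto.
Qed.

Lemma smooth_on_exp U : open U -> smooth_on U exp.
Proof.
  intros HU n; induction n as [|n IH]; [apply derivable_upto_0 |].
  apply derivable_upto_S; split; [intros; apply ex_derive_Reals_1, derivable_pt_exp |].
  apply derivable_upto_ext with exp; auto.
  intros; symmetry; apply is_derive_unique, is_derive_Reals, derivable_pt_lim_exp.
Qed.

Lemma smooth_on_sinh U : open U -> smooth_on U sinh.
Proof.
  intros HU n.
  enough (derivable_upto n U sinh /\ derivable_upto n U cosh) by tauto.
  induction n as [|n [IHs IHc]]; [split; apply derivable_upto_0 |].
  split; apply derivable_upto_S; split.
  - intros; apply ex_derive_Reals_1, derivable_pt_sinh.
  - apply derivable_upto_ext with cosh; auto.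
    intros; symmetry; apply is_derive_unique, is_derive_Reals, derivable_pt_lim_sinh.
  - intros; apply ex_derive_Reals_1, derivable_pt_cosh.
  - apply derivable_upto_ext with sinh; auto.
    intros; symmetry; apply is_derive_unique, is_derive_Reals, derivable_pt_lim_cosh.
Qed.

Lemma smooth_on_inv : smooth_on (fun x => 0 < x) Rinv.
Proof.
  intros n; induction n as [|n IH]; [apply derivable_upto_0 |].
  apply derivable_upto_S; split.
  - intros x Hx; auto_derive; lra.
  - apply derivable_upto_ext with (fun x => -1 * (/ x * / x)); [apply open_gt | |].
    + intros y Hy; symmetry; apply is_derive_unique; auto_derive; [lra | field; lra].
    + apply derivable_upto_scal, derivable_upto_mult; auto; apply open_gt.
Qed.

Lemma derivable_upto_inv n U g :
  open U -> (forall x, U x -> 0 < g x) -> derivable_upto n U g ->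
  derivable_upto n U (fun x => / g x).
Proof.
  intros HU Hg Hd; apply derivable_upto_comp with (fun x => 0 < x); auto.
  apply smooth_on_inv.
Qed.

Lemma smooth_on_ln : smooth_on (fun x => 0 < x) ln.
Proof.
  intros [|n]; [apply derivable_upto_0 |].
  apply derivable_upto_S; split.
  - intros x Hx; exists (/ x); apply is_derive_Reals, derivable_pt_lim_ln, Hx.
  - apply derivable_upto_ext with Rinv; [apply open_gt | | apply smooth_on_inv].
    intros y Hy; symmetry; apply is_derive_unique, is_derive_Reals, derivable_pt_lim_ln, Hy.
Qed.

(** * A smooth bump function *)

Inductive polynomial_fun : (R -> R) -> Prop :=
  | polynomial_const c : polynomial_fun (fun _ => c)
  | polynomial_id : polynomial_fun (fun x => x)
  | polynomial_plus p q :
      polynomial_fun p -> polynomial_fun q -> polynomial_fun (fun x => p x + q x)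
  | polynomial_mult p q :
      polynomial_fun p -> polynomial_fun q -> polynomial_fun (fun x => p x * q x).

Lemma polynomial_fun_derive p :
  polynomial_fun p -> exists q, polynomial_fun q /\ forall x, is_derive p x (q x).
Proof.
  induction 1 as [c | | p q _ [p' [Hp' Dp]] _ [q' [Hq' Dq]]
                 | p q Hp [p' [Hp' Dp]] Hq [q' [Hq' Dq]]].
  - exists (fun _ => 0); split; [apply (polynomial_const 0) |].
    intros; apply is_derive_Reals, derivable_pt_lim_const.
  - exists (fun _ => 1); split; [apply (polynomial_const 1) |].
    intros; apply is_derive_Reals, derivable_pt_lim_id.
  - exists (fun x => p' x + q' x); split; [now constructor |].
    intros x; apply (is_derive_plus p q); auto.
  - exists (fun x => p' x * q x + p x * q' x); split; [repeat constructor; auto |].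
    intros x; apply (is_derive_ext (fun x => p x * q x)); [reflexivity |].
    apply (is_derive_mult p q); auto; intros; apply Rmult_comm.
Qed.

Lemma polynomial_fun_bound p :
  polynomial_fun p -> exists C n, 0 <= C /\ forall y, 1 <= y -> Rabs (p y) <= C * y ^ n.
Proof.
  induction 1 as [c | | p q _ [C1 [n1 [C1p Hp]]] _ [C2 [n2 [C2p Hq]]]
                 | p q _ [C1 [n1 [C1p Hp]]] _ [C2 [n2 [C2p Hq]]]].
  - exists (Rabs c), 0%nat; split; [apply Rabs_pos | intros; simpl; lra].
  - exists 1, 1%nat; split; [lra | intros y Hy; rewrite Rabs_right; simpl; lra].
  - exists (C1 + C2), (n1 + n2)%nat; split; [lra |]; intros y Hy.
    assert (y ^ n1 <= y ^ (n1 + n2)) by (apply Rle_pow; [lra | lia]).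
    assert (y ^ n2 <= y ^ (n1 + n2)) by (apply Rle_pow; [lra | lia]).
    specialize (Hp y Hy); specialize (Hq y Hy).
    pose proof (Rabs_triang (p y) (q y)); nra.
  - exists (C1 * C2), (n1 + n2)%nat; split; [nra |]; intros y Hy.
    rewrite Rabs_mult, pow_add.
    replace (C1 * C2 * (y ^ n1 * y ^ n2)) with ((C1 * y ^ n1) * (C2 * y ^ n2)) by ring.
    apply Rmult_le_compat; auto using Rabs_pos.
Qed.

Lemma exp_mult_INR a M : exp (INR M * a) = exp a ^ M.
Proof. rewrite <- Rpower_pow by apply exp_pos; unfold Rpower; now rewrite ln_exp. Qed.

Lemma pow_div_le_exp y M : 0 <= y -> (0 < M)%nat -> (y / INR M) ^ M <= exp y.
Proof.
  intros Hy HM; assert (0 < INR M) by (apply lt_0_INR; lia).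
  replace (exp y) with (exp (y / INR M) ^ M)
    by (rewrite <- exp_mult_INR; f_equal; field; lra).
  apply pow_incr; split; [apply Rdiv_le_0_compat; lra |].
  pose proof (exp_ineq1_le (y / INR M)); lra.
Qed.

Definition exp_inv_poly (p : R -> R) (x : R) : R :=
  if Rle_dec x 0 then 0 else p (/ x) * exp (- / x).

(* With [y = 1/h] and [M = n + 2]: [|p y| e^(-y) <= C y^n M^M / y^M = C M^M h^2]. *)
Lemma exp_inv_poly_sqr_bound p :
  polynomial_fun p -> exists K, forall h, Rabs h <= 1 -> Rabs (exp_inv_poly p h) <= K * h ^ 2.
Proof.
  intros Hp; destruct (polynomial_fun_bound p Hp) as [C [n [HC Hbound]]].
  set (M := (n + 2)%nat).
  assert (HM : 0 < INR M) by (apply lt_0_INR; unfold M; lia).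
  exists (C * INR M ^ M); intros h Hh; unfold exp_inv_poly.
  destruct (Rle_dec h 0) as [Hh0 | Hh0].
  { rewrite Rabs_R0; apply Rmult_le_pos; [apply Rmult_le_pos, pow_le |]; nra. }
  set (y := / h).
  assert (Hy : 1 <= y) by (unfold y; rewrite Rabs_right in Hh by lra;
                           rewrite <- Rinv_1; apply Rinv_le_contravar; lra).
  replace h with (/ y) by (unfold y; apply Rinv_inv).
  rewrite Rabs_mult, (Rabs_right (exp _)) by (left; apply exp_pos).
  assert (Hexp : y ^ M / INR M ^ M <= exp y).
  { unfold Rdiv; rewrite <- pow_inv, <- Rpow_mult_distr.
    apply pow_div_le_exp; [lra | unfold M; lia]. }
  assert (Hyn : 0 < y ^ n) by (apply pow_lt; lra).
  assert (HMM : 0 < INR M ^ M) by (apply pow_lt; lra).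
  assert (Hdecay : exp (- y) <= INR M ^ M / (y ^ n * y ^ 2)).
  { rewrite exp_Ropp, <- pow_add; fold M.
    replace (INR M ^ M / y ^ M) with (/ (y ^ M / INR M ^ M))
      by (field; split; apply pow_nonzero; lra).
    apply Rinv_le_contravar; [| exact Hexp].
    apply Rdiv_lt_0_compat; [apply pow_lt |]; lra. }
  apply Rle_trans with (C * y ^ n * (INR M ^ M / (y ^ n * y ^ 2))).
  - apply Rmult_le_compat; auto using Rabs_pos; left; apply exp_pos.
  - rewrite pow_inv; right; field; repeat split; (apply pow_nonzero; lra) || lra.
Qed.

Lemma is_derive_0_of_sqr_bound (g : R -> R) K :
  (forall h, Rabs h <= 1 -> Rabs (g h) <= K * h ^ 2) -> is_derive g 0 0.
Proof.
  intros Hg.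
  assert (HK : 0 <= K).
  { specialize (Hg 1 ltac:(rewrite Rabs_R1; lra)); pose proof (Rabs_pos (g 1)); nra. }
  assert (Hg0 : g 0 = 0).
  { specialize (Hg 0 ltac:(rewrite Rabs_R0; lra)); pose proof (Rabs_pos (g 0)).
    apply Rabs_eq_0; simpl in Hg; lra. }
  apply is_derive_Reals; intros eps Heps.
  assert (Hd : 0 < Rmin 1 (eps / (K + 1))) by (apply Rmin_pos; [lra | apply Rdiv_lt_0_compat; lra]).
  exists (mkposreal _ Hd); intros h Hh0 Hh; simpl in Hh.
  pose proof (Rmin_l 1 (eps / (K + 1))); pose proof (Rmin_r 1 (eps / (K + 1))).
  rewrite Rplus_0_l, Hg0, Rminus_0_r, Rminus_0_r.
  assert (Hah : 0 < Rabs h) by (apply Rabs_pos_lt, Hh0).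
  unfold Rdiv; rewrite Rabs_mult, Rabs_inv.
  apply Rle_lt_trans with (K * Rabs h).
  - apply Rmult_le_reg_r with (Rabs h); [exact Hah |].
    rewrite Rmult_assoc, Rinv_l, Rmult_1_r by lra.
    replace (K * Rabs h * Rabs h) with (K * h ^ 2)
      by (rewrite <- pow2_abs; ring); apply Hg; lra.
  - apply Rle_lt_trans with (K * (eps / (K + 1))); [apply Rmult_le_compat_l; lra |].
    replace (K * (eps / (K + 1))) with (eps * (K / (K + 1))) by (field; lra).
    assert (K / (K + 1) < 1) by (apply Rmult_lt_reg_r with (K + 1); [lra |];
                                 unfold Rdiv; rewrite Rmult_assoc, Rinv_l; lra).
    nra.
Qed.

Lemma exp_inv_poly_derive p :
  polynomial_fun p ->
  exists q, polynomial_fun q /\ forall x, is_derive (exp_inv_poly p) x (exp_inv_poly q x).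
Proof.
  intros Hp; destruct (polynomial_fun_derive p Hp) as [p' [Hp' Dp]].
  exists (fun y => y * (y * (p y + -1 * p' y))); split; [repeat constructor; auto |].
  intros x; destruct (Rtotal_order x 0) as [Hx | [-> | Hx]].
  - unfold exp_inv_poly at 2; destruct (Rle_dec x 0); [| lra].
    apply is_derive_ext_loc with (fun _ => 0);
      [| apply is_derive_Reals, derivable_pt_lim_const].
    apply (locally_open (fun t => t < 0)); [apply open_lt | | exact Hx].
    intros t Ht; unfold exp_inv_poly; destruct (Rle_dec t 0); [reflexivity | lra].
  - unfold exp_inv_poly at 2; destruct (Rle_dec 0 0); [| lra].
    destruct (exp_inv_poly_sqr_bound p Hp) as [K HK].
    exact (is_derive_0_of_sqr_bound _ K HK).
  - unfold exp_inv_poly at 2; destruct (Rle_dec x 0); [lra |].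
    apply is_derive_ext_loc with (fun t => p (/ t) * exp (- / t)).
    { apply (locally_open (fun t => 0 < t)); [apply open_gt | | exact Hx].
      intros t Ht; unfold exp_inv_poly; destruct (Rle_dec t 0); [lra | reflexivity]. }
    auto_derive; [repeat split; try lra; exists (p' (/ x)); apply Dp |].
    change (fun x => p x) with p; rewrite (is_derive_unique _ _ _ (Dp (/ x))); field; lra.
Qed.

Definition exp_inv : R -> R := exp_inv_poly (fun _ => 1).

Lemma Derive_n_exp_inv k :
  exists p, polynomial_fun p /\ forall x, Derive_n exp_inv k x = exp_inv_poly p x.
Proof.
  induction k as [|k [p [Hp Hk]]].
  - exists (fun _ => 1); split; [apply (polynomial_const 1) | reflexivity].
  - destruct (exp_inv_poly_derive p Hp) as [q [Hq Dq]].
    exists q; split; [exact Hq |]; intros x; simpl.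
    rewrite (Derive_ext _ _ x Hk); apply is_derive_unique, Dq.
Qed.

Lemma smooth_on_exp_inv U : smooth_on U exp_inv.
Proof.
  intros n k _ x _; destruct (Derive_n_exp_inv k) as [p [Hp Hk]].
  destruct (exp_inv_poly_derive p Hp) as [q [_ Dq]].
  apply ex_derive_ext with (exp_inv_poly p); [intros; symmetry; apply Hk |].
  exists (exp_inv_poly q x); apply Dq.
Qed.

Lemma exp_inv_pos x : 0 < x -> exp_inv x = exp (- / x).
Proof. intros; unfold exp_inv, exp_inv_poly; destruct (Rle_dec x 0); [lra | ring]. Qed.

Lemma exp_inv_nonpos x : x <= 0 -> exp_inv x = 0.
Proof. intros; unfold exp_inv, exp_inv_poly; destruct (Rle_dec x 0); [reflexivity | lra]. Qed.

Definition bump (x : R) : R := exp_inv (x - 1) * exp_inv (2 - x).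

Lemma smooth_on_bump U : open U -> smooth_on U bump.
Proof.
  intros HU n; unfold bump.
  apply derivable_upto_mult; auto;
    apply derivable_upto_comp with (fun _ => True); auto; try apply smooth_on_exp_inv.
  - apply derivable_upto_minus; auto using derivable_upto_id, derivable_upto_const.
  - apply derivable_upto_minus; auto using derivable_upto_id, derivable_upto_const.
Qed.

Lemma bump_outside x : x <= 1 \/ 2 <= x -> bump x = 0.
Proof.
  unfold bump; intros [Hx | Hx];
    [rewrite (exp_inv_nonpos (x - 1)) | rewrite (exp_inv_nonpos (2 - x))]; lra || ring.
Qed.

Lemma bump_pos x : 1 < x < 2 -> 0 < bump x.
Proof.
  intros Hx; unfold bump; rewrite !exp_inv_pos by lra.
  apply Rmult_lt_0_compat; apply exp_pos.
Qed.

(** * The change of variables s = s(r) *)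

Lemma sinh_pos x : 0 < x -> 0 < sinh x.
Proof. intros; rewrite <- sinh_0; now apply sinh_lt. Qed.

Lemma exp_div_4_le_sinh x : 1 <= x -> exp x / 4 <= sinh x.
Proof.
  intros Hx; unfold sinh; rewrite exp_Ropp.
  assert (He : 0 < exp x) by apply exp_pos.
  assert (2 <= exp x * exp x) by (rewrite <- exp_plus; pose proof (exp_ineq1_le (x + x)); lra).
  assert (/ exp x <= exp x / 2); [| lra].
  apply Rmult_le_reg_r with (exp x); [exact He |].
  rewrite Rinv_l by lra; lra.
Qed.

Lemma exp_le a b : a <= b -> exp a <= exp b.
Proof. intros [H | ->]; [left; now apply exp_increasing | right; reflexivity]. Qed.

Definition sinh_inv_pow (N : nat) (x : R) : R := / (sinh x ^ (N - 1)).

Definition sinh_tail (N : nat) (r : R) : R :=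
  RInt_gen (sinh_inv_pow N) (at_point r) (Rbar_locally p_infty).

Lemma sinh_inv_pow_pos N x : 0 < x -> 0 < sinh_inv_pow N x.
Proof. intros; apply Rinv_0_lt_compat, pow_lt, sinh_pos; auto. Qed.

Lemma sinh_inv_pow_continuous N x : 0 < x -> continuous (sinh_inv_pow N) x.
Proof.
  intros Hx; apply (ex_derive_continuous (sinh_inv_pow N)).
  pose proof (sinh_pos x Hx); unfold sinh_inv_pow, sinh in *.
  auto_derive; apply pow_nonzero; lra.
Qed.

Lemma ex_RInt_sinh_inv_pow N a b : 0 < a -> 0 < b -> ex_RInt (sinh_inv_pow N) a b.
Proof.
  intros Ha Hb; apply (ex_RInt_continuous (V := R_CompleteNormedModule)); intros z Hz.
  apply sinh_inv_pow_continuous; pose proof (Rmin_glb_lt a b 0 Ha Hb); lra.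
Qed.

Lemma sinh_inv_pow_le_exp N x : (2 <= N)%nat -> 3 <= x -> sinh_inv_pow N x <= 4 * exp (- x).
Proof.
  intros HN Hx; unfold sinh_inv_pow.
  pose proof (exp_div_4_le_sinh x ltac:(lra)) as Hsh.
  pose proof (exp_ineq1_le x).
  assert (sinh x <= sinh x ^ (N - 1)).
  { replace (N - 1)%nat with (S (N - 2)) by lia; simpl.
    assert (1 <= sinh x ^ (N - 2)) by (apply pow_R1_Rle; lra); nra. }
  rewrite exp_Ropp; apply Rle_trans with (/ (exp x / 4)).
  - apply Rinv_le_contravar; lra.
  - right; field; apply Rgt_not_eq, exp_pos.
Qed.

Lemma RInt_sinh_inv_pow_bound N a b :
  (2 <= N)%nat -> 3 <= a -> a <= b -> 0 <= RInt (sinh_inv_pow N) a b <= 4 * exp (- a).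
Proof.
  intros HN Ha Hab.
  assert (Hexp : is_RInt (fun x => 4 * exp (- x)) a b (4 * exp (- a) - 4 * exp (- b))).
  { replace (4 * exp (- a) - 4 * exp (- b)) with (-4 * exp (- b) - -4 * exp (- a)) by ring.
    apply (is_RInt_derive (fun x => -4 * exp (- x))); intros x _.
    - auto_derive; [exact I | ring].
    - apply (ex_derive_continuous (fun x => 4 * exp (- x))); auto_derive; exact I. }
  split.
  - apply RInt_ge_0; [exact Hab | apply ex_RInt_sinh_inv_pow; lra |].
    intros x Hx; left; apply sinh_inv_pow_pos; lra.
  - apply Rle_trans with (4 * exp (- a) - 4 * exp (- b)); [| pose proof (exp_pos (- b)); lra].
    rewrite <- (is_RInt_unique _ _ _ _ Hexp).
    apply RInt_le; [exact Hab | apply ex_RInt_sinh_inv_pow; lra | eexists; exact Hexp |].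
    intros; apply sinh_inv_pow_le_exp; auto; lra.
Qed.

Lemma Rabs_RInt_sinh_inv_pow_le N u v :
  (2 <= N)%nat -> 3 <= u -> 3 <= v ->
  Rabs (RInt (sinh_inv_pow N) u v) <= 4 * exp (- Rmin u v).
Proof.
  intros HN Hu Hv; destruct (Rle_dec u v) as [Huv | Huv].
  - rewrite Rmin_left by exact Huv.
    pose proof (RInt_sinh_inv_pow_bound N u v HN Hu Huv); rewrite Rabs_right; lra.
  - rewrite Rmin_right by lra.
    pose proof (RInt_sinh_inv_pow_bound N v u HN Hv ltac:(lra)).
    rewrite <- opp_RInt_swap by (apply ex_RInt_sinh_inv_pow; lra).
    change (opp ?x) with (- x); rewrite Rabs_Ropp, Rabs_right; lra.
Qed.

Section SinhTail.

Variable N : nat.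
Hypothesis HN : (2 <= N)%nat.

Lemma ex_RInt_gen_sinh_inv_pow r :
  0 < r ->
  exists l, 0 <= l /\ is_RInt_gen (sinh_inv_pow N) (at_point r) (Rbar_locally p_infty) l.
Proof.
  intros Hr.
  assert (Hcauchy : exists l, filterlim (fun b => RInt (sinh_inv_pow N) r b)
                                        (Rbar_locally p_infty) (locally l)).
  { apply (filterlim_locally_cauchy (F := Rbar_locally p_infty)).
    intros eps; set (B := Rmax (Rmax r 3) (- ln (eps / 8))).
    pose proof (cond_pos eps) as Heps.
    assert (HB3 : 3 <= B) by (eapply Rle_trans; [apply Rmax_r | apply Rmax_l]).
    assert (HBr : r <= B) by (eapply Rle_trans; [apply Rmax_l | apply Rmax_l]).
    assert (HBe : exp (- B) <= eps / 8).
    { rewrite <- (exp_ln (eps / 8)) by lra.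
      apply exp_le; enough (- ln (eps / 8) <= B) by lra; apply Rmax_r. }
    exists (fun b => B < b); split; [now exists B |].
    intros u v Hu Hv; apply (norm_compat1 (V := R_NormedModule)).
    change (Rabs (RInt (sinh_inv_pow N) r v - RInt (sinh_inv_pow N) r u) < eps).
    rewrite <- (RInt_Chasles (sinh_inv_pow N) r u v) by (apply ex_RInt_sinh_inv_pow; lra).
    change (plus ?x ?y) with (x + y); rewrite Rplus_minus_l.
    pose proof (Rabs_RInt_sinh_inv_pow_le N u v HN ltac:(lra) ltac:(lra)).
    assert (exp (- Rmin u v) <= exp (- B)) by (apply exp_le, Ropp_le_contravar, Rmin_glb; lra).
    lra. }
  destruct Hcauchy as [l Hl]; exists l; split.
  { apply (closed_filterlim_loc _ _ l Hl); [| apply closed_ge].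
    exists r; intros b Hb; apply RInt_ge_0; [lra | apply ex_RInt_sinh_inv_pow; lra |].
    intros x Hx; left; apply sinh_inv_pow_pos; lra. }
  intros P HP.
  apply Filter_prod with (fun a => a = r) (fun b => r < b /\ P (RInt (sinh_inv_pow N) r b)).
  - reflexivity.
  - apply filter_and; [now exists r | apply Hl, HP].
  - intros a b -> [Hb HPb]; simpl; exists (RInt (sinh_inv_pow N) r b); split; [| exact HPb].
    apply (RInt_correct (V := R_CompleteNormedModule)), ex_RInt_sinh_inv_pow; lra.
Qed.

Lemma is_RInt_gen_sinh_tail r :
  0 < r -> is_RInt_gen (sinh_inv_pow N) (at_point r) (Rbar_locally p_infty) (sinh_tail N r).
Proof.
  intros Hr; destruct (ex_RInt_gen_sinh_inv_pow r Hr) as [l [_ Hl]].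
  unfold sinh_tail; now rewrite (is_RInt_gen_unique _ _ Hl).
Qed.

Lemma sinh_tail_nonneg r : 0 < r -> 0 <= sinh_tail N r.
Proof.
  intros Hr; destruct (ex_RInt_gen_sinh_inv_pow r Hr) as [l [Hl0 Hl]].
  unfold sinh_tail; now rewrite (is_RInt_gen_unique _ _ Hl).
Qed.

Lemma sinh_tail_Chasles r b :
  0 < r -> 0 < b -> sinh_tail N r = RInt (sinh_inv_pow N) r b + sinh_tail N b.
Proof.
  intros Hr Hb; unfold sinh_tail at 1.
  apply (is_RInt_gen_unique (V := R_CompleteNormedModule) (Fa := at_point r)
           (Fb := Rbar_locally p_infty)).
  apply (is_RInt_gen_Chasles (V := R_NormedModule) (sinh_inv_pow N) b).
  - apply is_RInt_gen_at_point, (RInt_correct (V := R_CompleteNormedModule)).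
    now apply ex_RInt_sinh_inv_pow.
  - now apply is_RInt_gen_sinh_tail.
Qed.

Lemma sinh_tail_pos r : 0 < r -> 0 < sinh_tail N r.
Proof.
  intros Hr; rewrite (sinh_tail_Chasles r (r + 1)) by lra.
  pose proof (sinh_tail_nonneg (r + 1) ltac:(lra)).
  enough (0 < RInt (sinh_inv_pow N) r (r + 1)) by lra.
  apply RInt_gt_0; [lra | |]; intros; [apply sinh_inv_pow_pos | apply sinh_inv_pow_continuous]; lra.
Qed.

Lemma is_derive_sinh_tail r : 0 < r -> is_derive (sinh_tail N) r (- sinh_inv_pow N r).
Proof.
  intros Hr.
  apply is_derive_ext_loc with (fun x => RInt (sinh_inv_pow N) x (r + 1) + sinh_tail N (r + 1)).
  { apply (locally_open (fun x => 0 < x)); [apply open_gt | | exact Hr].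
    intros x Hx; symmetry; apply sinh_tail_Chasles; lra. }
  assert (D : is_derive (fun x => RInt (sinh_inv_pow N) x (r + 1)) r (- sinh_inv_pow N r)).
  { apply (is_derive_RInt' (V := R_NormedModule) _ _ r (r + 1)).
    - apply (locally_open (fun x => 0 < x)); [apply open_gt | | exact Hr].
      intros x Hx; apply (RInt_correct (V := R_CompleteNormedModule)).
      apply ex_RInt_sinh_inv_pow; lra.
    - now apply sinh_inv_pow_continuous. }
  apply is_derive_Reals in D; apply is_derive_Reals.
  replace (- sinh_inv_pow N r) with (- sinh_inv_pow N r + 0) by ring.
  apply derivable_pt_lim_plus; [exact D | apply derivable_pt_lim_const].
Qed.

End SinhTail.

Section RadiusChange.

Variable N : nat.
Hypothesis HN : (3 <= N)%nat.

Let HN2 : (2 <= N)%nat. Proof. lia. Qed.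
Let HN_R : 1 <= INR N - 2.
Proof. apply le_INR in HN; simpl in HN; lra. Qed.

Lemma s_of_r_exp_ln r :
  s_of_r N r = exp (- (1 / (INR N - 2)) * ln ((INR N - 2) * sinh_tail N r)).
Proof. reflexivity. Qed.

Lemma s_of_r_pos r : 0 < s_of_r N r.
Proof. rewrite s_of_r_exp_ln; apply exp_pos. Qed.

Lemma s_of_r_pow_mul_tail r :
  0 < r -> s_of_r N r ^ (N - 2) * ((INR N - 2) * sinh_tail N r) = 1.
Proof.
  intros Hr; pose proof (sinh_tail_pos N HN2 r Hr).
  rewrite s_of_r_exp_ln, <- exp_mult_INR, minus_INR by lia; simpl INR.
  replace ((INR N - (1 + 1)) * _) with (- ln ((INR N - 2) * sinh_tail N r)) by (field; lra).
  rewrite exp_Ropp, exp_ln by nra; field; nra.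
Qed.

Lemma is_derive_s_of_r r :
  0 < r -> is_derive (s_of_r N) r ((s_of_r N r / sinh r) ^ (N - 1)).
Proof.
  intros Hr; pose proof (sinh_tail_pos N HN2 r Hr) as HI.
  pose proof (is_derive_sinh_tail N HN2 r Hr) as DI.
  pose proof (s_of_r_pow_mul_tail r Hr) as Hrel.
  pose proof (sinh_pos r Hr) as Hsh; pose proof (s_of_r_pos r) as Hs.
  apply is_derive_ext with (fun x => exp (- (1 / (INR N - 2)) * ln ((INR N - 2) * sinh_tail N x)));
    [intros; symmetry; apply s_of_r_exp_ln |].
  auto_derive; [repeat split; [now exists (- sinh_inv_pow N r) | nra] |].
  change (fun x => sinh_tail N x) with (sinh_tail N).
  rewrite (is_derive_unique _ _ _ DI), <- s_of_r_exp_ln.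
  unfold sinh_inv_pow, Rdiv; rewrite Rpow_mult_distr, pow_inv.
  replace (N - 1)%nat with (S (N - 2)) by lia; simpl.
  set (s := s_of_r N r) in *; set (I := sinh_tail N r) in *.
  replace (s ^ (N - 2)) with (/ ((INR N - 2) * I)) by (field_simplify_eq; nra).
  field; repeat split; try apply pow_nonzero; nra.
Qed.

Lemma s_of_r_increasing x y : 0 < x -> x < y -> s_of_r N x < s_of_r N y.
Proof.
  intros Hx Hxy.
  apply (incr_function (s_of_r N) 0 p_infty (fun r => (s_of_r N r / sinh r) ^ (N - 1)));
    simpl; auto; intros r Hr _.
  - now apply is_derive_s_of_r.
  - apply Rlt_gt, pow_lt, Rdiv_lt_0_compat; [apply s_of_r_pos | now apply sinh_pos].
Qed.

Lemma s_of_r_le x y : 0 < x -> x <= y -> s_of_r N x <= s_of_r N y.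
Proof. intros Hx [Hxy | ->]; [left; now apply s_of_r_increasing | right; reflexivity]. Qed.

Lemma s_of_r_continuity_pt x : 0 < x -> continuity_pt (s_of_r N) x.
Proof.
  intros Hx; apply derivable_continuous_pt; eexists.
  apply is_derive_Reals, is_derive_s_of_r, Hx.
Qed.

Lemma r_of_s_s_of_r r : 0 < r -> r_of_s N (s_of_r N r) = r.
Proof.
  intros Hr; unfold r_of_s.
  destruct (epsilon_spec (inhabits 0) (fun r' => 0 < r' /\ s_of_r N r' = s_of_r N r))
    as [Hr' Hs]; [now exists r |].
  set (r' := epsilon _ _) in *.
  destruct (Rtotal_order r' r) as [H | [H | H]]; [| exact H |];
    [pose proof (s_of_r_increasing r' r Hr' H) | pose proof (s_of_r_increasing r r' Hr H)]; lra.
Qed.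

Lemma r_of_s_bounds a b y :
  0 < a -> a < b -> s_of_r N a <= y <= s_of_r N b ->
  a <= r_of_s N y <= b /\ s_of_r N (r_of_s N y) = y.
Proof.
  intros Ha Hab Hy.
  assert (Hr : exists r, a <= r <= b /\ s_of_r N r = y).
  { destruct (Req_dec y (s_of_r N a)) as [-> | Hya]; [exists a; lra |].
    destruct (Req_dec y (s_of_r N b)) as [-> | Hyb]; [exists b; lra |].
    destruct (Ranalysis5.IVT_interv (fun t => s_of_r N t - y) a b) as [z [Hz Hzy]]; try lra.
    - intros t Ht; apply continuity_pt_minus;
        [apply s_of_r_continuity_pt; lra | apply continuity_pt_const; intros ? ?; reflexivity].
    - exists z; split; lra. }
  destruct Hr as [r [Hr <-]]; rewrite r_of_s_s_of_r; lra.
Qed.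

Lemma r_of_s_continuity_pt a b y :
  0 < a -> a < b -> s_of_r N a < y < s_of_r N b -> continuity_pt (r_of_s N) y.
Proof.
  intros Ha Hab Hy.
  apply (Ranalysis5.continuity_pt_recip_interv (s_of_r N) (r_of_s N) a b); auto.
  - intros x z Hx Hxz Hz; apply s_of_r_increasing; lra.
  - intros x H1 H2; apply (r_of_s_bounds a b x Ha Hab); lra.
  - intros x H1 H2; apply (r_of_s_bounds a b x Ha Hab); lra.
  - intros x Hx; apply s_of_r_continuity_pt; lra.
Qed.

Lemma is_derive_r_of_s a b y :
  0 < a -> a < b -> s_of_r N a < y < s_of_r N b ->
  is_derive (r_of_s N) y ((sinh (r_of_s N y) / y) ^ (N - 1)).
Proof.
  intros Ha Hab Hy.
  destruct (r_of_s_bounds a b y Ha Hab ltac:(lra)) as [Hr Hsr].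
  pose (Hder x (Hx : 0 < x) := exist (derivable_pt_lim (s_of_r N) x)
         ((s_of_r N x / sinh x) ^ (N - 1))
         (proj1 (is_derive_Reals _ _ _) (is_derive_s_of_r x Hx))).
  assert (D := Ranalysis5.derivable_pt_lim_recip_interv (s_of_r N) (r_of_s N)
           (s_of_r N a) (s_of_r N b) y
           (fun x Hx => Hder x ltac:(rewrite !r_of_s_s_of_r in Hx by lra; lra))
           (r_of_s_continuity_pt a b y Ha Hab Hy) (s_of_r_increasing a b Ha Hab) Hy
           ltac:(rewrite !r_of_s_s_of_r by lra; lra)).
  simpl in D; apply is_derive_Reals.
  set (r := r_of_s N y) in *.
  pose proof (sinh_pos r ltac:(lra)) as Hsh.
  assert (Hy0 : 0 < y) by (rewrite <- Hsr; apply s_of_r_pos).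
  replace ((sinh r / y) ^ (N - 1)) with (1 / (s_of_r N r / sinh r) ^ (N - 1)).
  - apply D; [intros x Hx; apply (r_of_s_bounds a b x Ha Hab); lra |].
    apply Rgt_not_eq, pow_lt, Rdiv_lt_0_compat; [apply s_of_r_pos | exact Hsh].
  - rewrite Hsr; unfold Rdiv; rewrite !Rpow_mult_distr, !pow_inv.
    field; split; apply pow_nonzero; lra.
Qed.

Lemma smooth_on_r_of_s a b :
  0 < a -> a < b -> smooth_on (fun y => s_of_r N a < y < s_of_r N b) (r_of_s N).
Proof.
  intros Ha Hab; set (U := fun y => s_of_r N a < y < s_of_r N b).
  assert (HU : open U) by (apply open_and; [apply open_gt | apply open_lt]).
  assert (Upos : forall y, U y -> 0 < y)
    by (intros y [Hy _]; pose proof (s_of_r_pos a); lra).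
  intros n; induction n as [|n IH]; [apply derivable_upto_0 |].
  apply derivable_upto_S; split; [intros x Hx; eexists; now apply (is_derive_r_of_s a b) |].
  apply derivable_upto_ext with (fun y => (sinh (r_of_s N y) * / y) ^ (N - 1)); auto.
  - intros y Hy; symmetry; apply is_derive_unique, (is_derive_r_of_s a b); auto.
  - apply derivable_upto_pow, derivable_upto_mult; auto.
    + apply derivable_upto_comp with (fun _ => True); auto; apply smooth_on_sinh, open_true.
    + apply derivable_upto_subset with (fun x => 0 < x); [exact Upos | apply smooth_on_inv].
Qed.

End RadiusChange.

(** * Radial Laplacian in the variable r *)

Lemma derivable_upto_radial_lap N n U v :
  open U -> (forall x, U x -> 0 < x) -> derivable_upto (n + 2) U v ->
  derivable_upto n U (radial_lap N v).
Proof.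
  intros HU Hpos Hv; unfold radial_lap.
  apply derivable_upto_plus; [exact HU | now apply derivable_upto_Derive_n |].
  apply derivable_upto_mult; [exact HU | |].
  - apply (derivable_upto_ext U HU) with (fun y => (INR N - 1) * / y);
      [intros; unfold Rdiv; ring |].
    apply derivable_upto_scal, derivable_upto_inv, derivable_upto_id; auto.
  - apply (derivable_upto_Derive_n U n 1), (derivable_upto_le U (n + 2)); [lia | exact Hv].
Qed.

Section RadialLaplacian.

Variable N : nat.
Hypothesis HN : (3 <= N)%nat.
Variables a b : R.
Hypothesis Ha : 0 < a.
Hypothesis Hab : a < b.
Variables Phi Phi1 Phi2 v : R -> R.
Hypothesis Phi_derive : forall r, 0 < r -> is_derive Phi r (Phi1 r).
Hypothesis Phi1_derive : forall r, 0 < r -> is_derive Phi1 r (Phi2 r).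
Hypothesis v_eq : forall s, s_of_r N a < s < s_of_r N b -> v s = Phi (r_of_s N s).

Let window_open : open (fun s => s_of_r N a < s < s_of_r N b).
Proof. apply open_and; [apply open_gt | apply open_lt]. Qed.

Lemma is_derive_comp_r_of_s s :
  s_of_r N a < s < s_of_r N b ->
  is_derive v s ((sinh (r_of_s N s) / s) ^ (N - 1) * Phi1 (r_of_s N s)).
Proof.
  intros Hs; destruct (r_of_s_bounds N HN a b s Ha Hab ltac:(lra)) as [Hr _].
  apply is_derive_ext_loc with (fun s => Phi (r_of_s N s)).
  { apply (locally_eq_on_open _ window_open); auto; intros; symmetry; auto. }
  apply (is_derive_comp Phi (r_of_s N)).
  - apply Phi_derive; lra.
  - now apply (is_derive_r_of_s N HN a b).
Qed.

Lemma radial_lap_comp_r_of_s s :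
  s_of_r N a < s < s_of_r N b ->
  radial_lap N v s = rho N s * (Phi2 (r_of_s N s)
    + (INR N - 1) * (cosh (r_of_s N s) / sinh (r_of_s N s)) * Phi1 (r_of_s N s)).
Proof.
  intros Hs; destruct (r_of_s_bounds N HN a b s Ha Hab ltac:(lra)) as [Hr Hsr].
  assert (Hs0 : 0 < s) by (rewrite <- Hsr; apply s_of_r_pos).
  pose proof (is_derive_r_of_s N HN a b s Ha Hab Hs) as Dr.
  pose proof (Phi1_derive (r_of_s N s) ltac:(lra)) as DP.
  set (r := r_of_s N s) in *.
  assert (Hsh : 0 < sinh r) by (apply sinh_pos; lra).
  unfold radial_lap; simpl Derive_n.
  rewrite (Derive_ext_loc (Derive v)
             (fun y => (sinh (r_of_s N y) / y) ^ (N - 1) * Phi1 (r_of_s N y))).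
  2: { apply (locally_eq_on_open _ window_open); auto; intros y Hy.
       apply is_derive_unique, is_derive_comp_r_of_s, Hy. }
  rewrite (is_derive_unique _ _ _ (is_derive_comp_r_of_s s Hs)).
  match goal with |- context [Derive ?f s] =>
    replace (Derive f s) with
      (INR (N - 1) * (sinh r / s) ^ (N - 2)
         * (cosh r * (sinh r / s) ^ (N - 1) / s - sinh r / s ^ 2) * Phi1 r
       + (sinh r / s) ^ (N - 1) * ((sinh r / s) ^ (N - 1) * Phi2 r)) end.
  2: { symmetry; apply is_derive_unique; auto_derive.
       - repeat split; try lra; eexists; [exact Dr | exact DP | exact Dr].
       - change (fun x => r_of_s N x) with (r_of_s N); change (fun x => Phi1 x) with Phi1.
         fold r; rewrite (is_derive_unique _ _ _ Dr), (is_derive_unique _ _ _ DP).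
         replace (Init.Nat.pred (N - 1)) with (N - 2)%nat by lia.
         unfold Rdiv; field; lra. }
  unfold rho; fold r.
  replace (2 * (N - 1))%nat with ((N - 1) + (N - 1))%nat by lia.
  rewrite pow_add; replace (N - 1)%nat with (S (N - 2)) by lia; rewrite S_INR.
  replace (INR N) with (INR (N - 2) + 2) by (rewrite minus_INR by lia; simpl; ring).
  simpl; field; lra.
Qed.

End RadialLaplacian.

(** * The test functions *)

Definition half_N_minus_1 (N : nat) : R := (INR N - 1) / 2.

Section Profile.

Variables (N : nat) (L : R).
Hypothesis HL : 0 < L.

Definition profile_log (r : R) : R := - half_N_minus_1 N * ln (sinh r) + ln r / 2.
Definition dprofile_log (r : R) : R := - half_N_minus_1 N * (cosh r / sinh r) + / (2 * r).
Definition d2profile_log (r : R) : R :=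
  - half_N_minus_1 N * (1 - cosh r ^ 2 / sinh r ^ 2) - / (2 * r ^ 2).

Definition bump_at (k : nat) (r : R) : R := Derive_n bump k (ln r / L).

Definition profile (r : R) : R := exp (profile_log r) * bump_at 0 r.
Definition dprofile (r : R) : R :=
  exp (profile_log r) * (dprofile_log r * bump_at 0 r + bump_at 1 r / (L * r)).
Definition d2profile (r : R) : R :=
  exp (profile_log r) * ((d2profile_log r + dprofile_log r ^ 2) * bump_at 0 r
    + 2 * dprofile_log r * bump_at 1 r / (L * r)
    + bump_at 2 r / (L ^ 2 * r ^ 2) - bump_at 1 r / (L * r ^ 2)).

Lemma ex_derive_Derive_n_bump k x : ex_derive (Derive_n bump k) x.
Proof. apply (smooth_on_bump _ open_true (S k) k); auto. Qed.

Lemma is_derive_profile r : 0 < r -> is_derive profile r (dprofile r).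
Proof.
  intros Hr; pose proof (sinh_pos r Hr).
  unfold profile, dprofile, profile_log, dprofile_log, bump_at; simpl Derive_n.
  auto_derive; [repeat split; try lra; apply (ex_derive_Derive_n_bump 0) |].
  change (fun x => bump x) with bump; unfold Rdiv; field; repeat split; lra.
Qed.

Lemma is_derive_dprofile r : 0 < r -> is_derive dprofile r (d2profile r).
Proof.
  intros Hr; pose proof (sinh_pos r Hr).
  unfold dprofile, d2profile, profile_log, dprofile_log, d2profile_log, bump_at; simpl Derive_n.
  auto_derive.
  - repeat split; try lra; try apply (ex_derive_Derive_n_bump 0);
      try apply (ex_derive_Derive_n_bump 1); apply Rmult_integral_contrapositive; split; lra.
  - change (fun x => bump x) with bump; change (fun x => Derive bump x) with (Derive bump).
    unfold Rdiv; field; repeat split; lra.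
Qed.

Lemma cosh_sqr r : cosh r ^ 2 = 1 + sinh r ^ 2.
Proof.
  unfold cosh, sinh.
  assert (exp r * exp (- r) = 1) by (rewrite <- exp_plus, Rplus_opp_r; apply exp_0).
  nra.
Qed.

Definition profile_lap_factor (r : R) : R :=
  bump_at 2 r / (L ^ 2 * r ^ 2) - bump_at 0 r / (4 * r ^ 2)
  - (half_N_minus_1 N ^ 2 + (half_N_minus_1 N ^ 2 - half_N_minus_1 N) / sinh r ^ 2) * bump_at 0 r.

(* The terms in [bump_at 1] cancel: this is why the weight [sinh r ^ (-m) * sqrt r] is used. *)
Lemma profile_hyperbolic_lap r :
  0 < r ->
  d2profile r + (INR N - 1) * (cosh r / sinh r) * dprofile r
  = exp (profile_log r) * profile_lap_factor r.
Proof.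
  intros Hr; pose proof (sinh_pos r Hr); pose proof (cosh_sqr r).
  replace (INR N - 1) with (2 * half_N_minus_1 N) by (unfold half_N_minus_1; field).
  apply Rminus_diag_uniq.
  transitivity (exp (profile_log r) * bump_at 0 r * (half_N_minus_1 N - half_N_minus_1 N ^ 2)
                / sinh r ^ 2 * (cosh r ^ 2 - 1 - sinh r ^ 2)).
  - unfold d2profile, dprofile, d2profile_log, dprofile_log, profile_lap_factor.
    field; repeat split; lra.
  - replace (cosh r ^ 2 - 1 - sinh r ^ 2) with 0 by lra; ring.
Qed.

Lemma smooth_on_profile : smooth_on (fun r => 0 < r) profile.
Proof.
  intros n; assert (Hpos := open_gt 0); unfold profile, profile_log, bump_at; simpl Derive_n.
  apply derivable_upto_mult; auto.
  - apply derivable_upto_comp with (fun _ => True); auto; [apply (smooth_on_exp _ open_true n) |].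
    apply derivable_upto_plus; auto.
    + apply derivable_upto_scal; auto.
      apply derivable_upto_comp with (fun x => 0 < x); auto using sinh_pos;
        [apply (smooth_on_ln n) | apply (smooth_on_sinh _ Hpos n)].
    + apply derivable_upto_ext with (fun x => / 2 * ln x); auto; [intros; unfold Rdiv; ring |].
      apply derivable_upto_scal, (smooth_on_ln n); auto.
  - apply derivable_upto_comp with (fun _ => True); auto; [apply (smooth_on_bump _ open_true n) |].
    apply derivable_upto_ext with (fun x => / L * ln x); auto; [intros; unfold Rdiv; ring |].
    apply derivable_upto_scal, (smooth_on_ln n); auto.
Qed.

Lemma profile_outside r : 0 < r -> r <= exp L \/ exp (2 * L) <= r -> profile r = 0.
Proof.
  intros Hr Hout; unfold profile, bump_at; simpl Derive_n.
  rewrite bump_outside; [ring |].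
  assert (Hln : ln r <= L \/ 2 * L <= ln r).
  { destruct Hout as [H | H]; [left | right]; [rewrite <- (ln_exp L) | rewrite <- (ln_exp (2 * L))];
      apply ln_le; auto using exp_pos. }
  unfold Rdiv; destruct Hln; [left | right]; apply Rmult_le_reg_r with L; try lra;
    rewrite Rmult_assoc, Rinv_l; lra.
Qed.

End Profile.

(* The cut-off to [s_of_r N 1 < s < s_of_r N (exp (3 L))] changes nothing, since the profile
   vanishes for [r] outside [[exp L, exp (2 L)]]; it only keeps [r_of_s] where it is smooth. *)
Definition test_fun (N : nat) (L s : R) : R :=
  if Rlt_dec (s_of_r N 1) s then
    if Rlt_dec s (s_of_r N (exp (3 * L))) then profile N L (r_of_s N s) else 0
  else 0.

Definition lap_integrand (N : nat) (v : R -> R) (s : R) : R :=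
  / rho N s * (radial_lap N v s) ^ 2 * s ^ (N - 1).
Definition sqr_integrand (N : nat) (v : R -> R) (s : R) : R :=
  rho N s * (v s) ^ 2 * s ^ (N - 1).
Definition hardy_integrand (N : nat) (v : R -> R) (s : R) : R :=
  rho N s / (r_of_s N s) ^ 2 * (v s) ^ 2 * s ^ (N - 1).

Definition rellich_defect (N : nat) (A : R) (v : R -> R) (s : R) : R :=
  lap_integrand N v s - (INR N - 1) ^ 4 / 16 * sqr_integrand N v s
  - A * hardy_integrand N v s.

Definition test_window (N : nat) (L s : R) : Prop := s_of_r N 1 < s < s_of_r N (exp (3 * L)).
Definition test_outside (N : nat) (L s : R) : Prop :=
  s < s_of_r N (exp L) \/ s_of_r N (exp (2 * L)) < s.

Section TestFunction.

Variables (N : nat) (L : R).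
Hypothesis HN : (3 <= N)%nat.
Hypothesis HL : 0 < L.

Let window_open : open (test_window N L).
Proof. apply open_and; [apply open_gt | apply open_lt]. Qed.

Let outside_open : open (test_outside N L).
Proof. apply open_or; [apply open_lt | apply open_gt]. Qed.

Lemma exp_window_order : 1 < exp L /\ exp L < exp (2 * L) /\ exp (2 * L) < exp (3 * L).
Proof.
  pose proof (exp_ineq1 L ltac:(lra)).
  split; [lra | split; apply exp_increasing; lra].
Qed.

Let window_r_of_s s :
  test_window N L s -> 1 <= r_of_s N s <= exp (3 * L) /\ s_of_r N (r_of_s N s) = s.
Proof.
  intros Hs; pose proof exp_window_order.
  apply (r_of_s_bounds N HN); unfold test_window in Hs; lra.
Qed.

Let window_pos s : test_window N L s -> 0 < s.
Proof. intros [Hs _]; pose proof (s_of_r_pos N 1); lra. Qed.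

Lemma test_fun_window s : test_window N L s -> test_fun N L s = profile N L (r_of_s N s).
Proof.
  intros [H1 H2]; unfold test_fun.
  destruct (Rlt_dec (s_of_r N 1) s); [| lra]; destruct (Rlt_dec s _); [reflexivity | lra].
Qed.

Lemma test_fun_outside s : test_outside N L s -> test_fun N L s = 0.
Proof.
  intros Hs; unfold test_fun.
  destruct (Rlt_dec (s_of_r N 1) s) as [H1 |]; [| reflexivity].
  destruct (Rlt_dec s _) as [H2 |]; [| reflexivity].
  destruct (window_r_of_s s (conj H1 H2)) as [Hr Hsr].
  apply profile_outside; [exact HL | lra |].
  destruct Hs as [Hs | Hs]; [left | right]; apply Rnot_lt_le; intros Hlt;
    [pose proof (s_of_r_increasing N HN (exp L) (r_of_s N s) (exp_pos _) Hlt)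
    | pose proof (s_of_r_increasing N HN (r_of_s N s) (exp (2 * L)) ltac:(lra) Hlt)]; lra.
Qed.

Lemma window_or_outside s : test_window N L s \/ test_outside N L s.
Proof.
  pose proof exp_window_order as [H1 [H2 H3]].
  pose proof (s_of_r_increasing N HN 1 (exp L) ltac:(lra) H1).
  pose proof (s_of_r_increasing N HN (exp (2 * L)) (exp (3 * L)) (exp_pos _) H3).
  unfold test_window, test_outside.
  destruct (Rlt_dec s (s_of_r N (exp L))); [right; left; assumption |].
  destruct (Rlt_dec (s_of_r N (exp (2 * L))) s); [right; right; assumption |].
  left; lra.
Qed.

Lemma smooth_on_window_test_fun : smooth_on (test_window N L) (test_fun N L).
Proof.
  intros n; pose proof exp_window_order.
  apply derivable_upto_ext with (fun s => profile N L (r_of_s N s)); auto;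
    [intros; symmetry; now apply test_fun_window |].
  apply derivable_upto_comp with (fun r => 0 < r); auto.
  - intros y Hy; destruct (window_r_of_s y Hy); lra.
  - apply smooth_on_profile.
  - apply (smooth_on_r_of_s N HN 1 (exp (3 * L))); lra.
Qed.

Lemma smooth_cc_pos_test_fun : smooth_cc_pos (test_fun N L).
Proof.
  pose proof exp_window_order; split.
  - intros k x; destruct (window_or_outside x) as [Hx | Hx].
    + apply (smooth_on_window_test_fun (S k) k); [lia | exact Hx].
    + enough (Hout : derivable_upto (S k) (test_outside N L) (test_fun N L))
        by (apply Hout; [lia | exact Hx]).
      apply (derivable_upto_ext (test_outside N L) outside_open) with (fun _ => 0);
        [| apply (derivable_upto_const _ outside_open)].
      intros y Hy; symmetry; exact (test_fun_outside y Hy).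
  - exists (s_of_r N (exp L)), (s_of_r N (exp (2 * L))).
    split; [apply s_of_r_pos | split; [apply s_of_r_increasing; auto; lra |]].
    intros x Hx; now apply test_fun_outside.
Qed.

Lemma radial_lap_test_fun s :
  test_window N L s ->
  radial_lap N (test_fun N L) s
  = rho N s * (exp (profile_log N (r_of_s N s)) * profile_lap_factor N L (r_of_s N s)).
Proof.
  intros Hs; pose proof exp_window_order.
  destruct (window_r_of_s s Hs) as [Hr _].
  rewrite <- profile_hyperbolic_lap by lra.
  apply (radial_lap_comp_r_of_s N HN 1 (exp (3 * L)) ltac:(lra) ltac:(lra)
           (profile N L) (dprofile N L) (d2profile N L)); [| | | exact Hs].
  - intros; now apply is_derive_profile.
  - intros; now apply is_derive_dprofile.
  - intros y Hy; now apply test_fun_window.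
Qed.

Lemma smooth_on_window_rho : smooth_on (test_window N L) (rho N).
Proof.
  intros n; pose proof exp_window_order; unfold rho.
  apply derivable_upto_ext with (fun s => (sinh (r_of_s N s) * / s) ^ (2 * (N - 1))); auto.
  apply derivable_upto_pow, derivable_upto_mult; auto.
  - apply derivable_upto_comp with (fun _ => True); auto; [apply (smooth_on_sinh _ open_true n) |].
    apply (smooth_on_r_of_s N HN 1 (exp (3 * L))); lra.
  - apply derivable_upto_subset with (fun x => 0 < x); [exact window_pos | apply smooth_on_inv].
Qed.

Lemma smooth_on_window_integrands n :
  derivable_upto n (test_window N L) (lap_integrand N (test_fun N L)) /\
  derivable_upto n (test_window N L) (sqr_integrand N (test_fun N L)) /\
  derivable_upto n (test_window N L) (hardy_integrand N (test_fun N L)).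
Proof.
  pose proof exp_window_order.
  pose proof smooth_on_window_test_fun as Hv; pose proof (smooth_on_window_rho n) as Hrho.
  assert (Hr : forall y, test_window N L y -> 0 < r_of_s N y)
    by (intros y Hy; destruct (window_r_of_s y Hy); lra).
  assert (Hinv_rho : derivable_upto n (test_window N L) (fun s => / rho N s)).
  { apply derivable_upto_inv; auto; intros y Hy; unfold rho.
    apply pow_lt, Rdiv_lt_0_compat; [apply sinh_pos, Hr, Hy | auto]. }
  assert (Hhardy : derivable_upto n (test_window N L) (fun s => rho N s / r_of_s N s ^ 2)).
  { apply (derivable_upto_ext _ window_open) with (fun s => rho N s * / (r_of_s N s ^ 2));
      [intros; unfold Rdiv; ring |].
    apply derivable_upto_mult, derivable_upto_inv; auto; [intros; apply pow_lt; auto |].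
    apply derivable_upto_pow, (smooth_on_r_of_s N HN 1 (exp (3 * L))); auto; lra. }
  pose proof (derivable_upto_mult (test_window N L) window_open n) as Hmul.
  pose proof (derivable_upto_pow (test_window N L) window_open n) as Hpow.
  pose proof (derivable_upto_id (test_window N L) window_open n) as Hid.
  unfold lap_integrand, sqr_integrand, hardy_integrand; repeat split.
  - apply Hmul; [apply Hmul; [exact Hinv_rho | apply Hpow] | now apply Hpow].
    apply derivable_upto_radial_lap; auto.
  - apply Hmul; [apply Hmul; [exact Hrho | apply Hpow, Hv] | now apply Hpow].
  - apply Hmul; [apply Hmul; [exact Hhardy | apply Hpow, Hv] | now apply Hpow].
Qed.

End TestFunction.

(** * Integrals of the test functions *)

Lemma is_RInt_zero (f : R -> R) a b :
  (forall x, Rmin a b < x < Rmax a b -> f x = 0) -> is_RInt f a b 0.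
Proof.
  intros Hf; apply (is_RInt_ext (fun _ => 0)); [intros; symmetry; auto |].
  pose proof (is_RInt_const (V := R_NormedModule) a b 0) as H.
  unfold scal in H; simpl in H; unfold mult in H; simpl in H; now rewrite Rmult_0_r in H.
Qed.

Lemma int_0_oo_supported (f : R -> R) c d :
  0 < c -> c < d -> (forall x, x < c \/ d < x -> f x = 0) -> ex_RInt f c d ->
  int_0_oo f = RInt f c d.
Proof.
  intros Hc Hcd Hf Hint; unfold int_0_oo.
  apply (is_RInt_gen_unique (V := R_CompleteNormedModule)); intros P HP.
  apply Filter_prod with (fun a => 0 < a < c) (fun b => d < b).
  - exists (mkposreal c Hc); intros y Hy Hy0.
    change (Rabs (y - 0) < c) in Hy; apply Rabs_lt_between in Hy; lra.
  - now exists d.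
  - intros x y Hx Hy; exists (RInt f c d); split; [| now apply locally_singleton].
    replace (RInt f c d) with (plus (plus 0 (RInt f c d)) 0) by (unfold plus; simpl; ring).
    apply (is_RInt_Chasles f x d y); [apply (is_RInt_Chasles f x c d) |].
    + apply is_RInt_zero; intros z Hz; apply Hf; left; rewrite Rmax_right in Hz; lra.
    + now apply (RInt_correct (V := R_CompleteNormedModule)).
    + apply is_RInt_zero; intros z Hz; apply Hf; right; rewrite Rmin_left in Hz; lra.
Qed.

Lemma integrands_locally_zero N (v : R -> R) x :
  locally x (fun y => v y = 0) ->
  lap_integrand N v x = 0 /\ sqr_integrand N v x = 0 /\ hardy_integrand N v x = 0.
Proof.
  intros Hv; pose proof (locally_singleton _ _ Hv) as Hv0; simpl in Hv0.
  assert (Hd1 : Derive v x = 0)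
    by (rewrite (Derive_ext_loc v (fun _ => 0)) by exact Hv; apply Derive_const).
  assert (Hd2 : Derive_n v 2 x = 0)
    by (rewrite (Derive_n_ext_loc v (fun _ => 0)) by exact Hv; apply Derive_n_const).
  unfold lap_integrand, sqr_integrand, hardy_integrand, radial_lap.
  rewrite Hv0, Hd1, Hd2; repeat split; ring.
Qed.

Lemma RInt_rellich_defect_nonneg N A (v : R -> R) c d :
  0 < c -> c < d -> (forall x, x < c \/ d < x -> locally x (fun y => v y = 0)) ->
  ex_RInt (lap_integrand N v) c d -> ex_RInt (sqr_integrand N v) c d ->
  ex_RInt (hardy_integrand N v) c d ->
  int_0_oo (lap_integrand N v) >= (INR N - 1) ^ 4 / 16 * int_0_oo (sqr_integrand N v)
                                  + A * int_0_oo (hardy_integrand N v) ->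
  0 <= RInt (rellich_defect N A v) c d.
Proof.
  intros Hc Hcd Hv H1 H2 H3 Hineq.
  rewrite !(int_0_oo_supported _ c d) in Hineq by
    (auto; intros x Hx; now apply integrands_locally_zero, Hv).
  set (k := (INR N - 1) ^ 4 / 16) in *.
  replace (RInt (rellich_defect N A v) c d) with
    (RInt (lap_integrand N v) c d - k * RInt (sqr_integrand N v) c d
     - A * RInt (hardy_integrand N v) c d); [lra |].
  symmetry; apply is_RInt_unique.
  apply (is_RInt_ext (fun x => minus (minus (lap_integrand N v x) (scal k (sqr_integrand N v x)))
                                     (scal A (hardy_integrand N v x)))).
  { intros x _; reflexivity. }
  apply (is_RInt_minus (V := R_NormedModule)); [apply (is_RInt_minus (V := R_NormedModule)) |].
  - now apply (RInt_correct (V := R_CompleteNormedModule)).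
  - apply (is_RInt_scal (V := R_NormedModule)).
    now apply (RInt_correct (V := R_CompleteNormedModule)).
  - apply (is_RInt_scal (V := R_NormedModule)).
    now apply (RInt_correct (V := R_CompleteNormedModule)).
Qed.

Definition s_exp (N : nat) (L t : R) : R := s_of_r N (exp (L * t)).
Definition ds_exp (N : nat) (L t : R) : R :=
  (s_of_r N (exp (L * t)) / sinh (exp (L * t))) ^ (N - 1) * (L * exp (L * t)).

Section ExponentialChange.

Variables (N : nat) (L : R).
Hypothesis HN : (3 <= N)%nat.

Lemma is_derive_s_of_r_exp t : is_derive (s_exp N L) t (ds_exp N L t).
Proof.
  unfold s_exp, ds_exp; rewrite Rmult_comm.
  apply (is_derive_comp (s_of_r N) (fun t => exp (L * t))).
  - apply is_derive_s_of_r; [exact HN | apply exp_pos].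
  - auto_derive; [exact I | ring].
Qed.

Lemma continuous_ds_exp t : continuous (ds_exp N L) t.
Proof.
  apply (ex_derive_continuous (ds_exp N L)); unfold ds_exp.
  pose proof (sinh_pos _ (exp_pos (L * t))).
  auto_derive; repeat split; try lra.
  eexists; apply is_derive_s_of_r, exp_pos; exact HN.
Qed.

Lemma RInt_s_of_r_exp (f : R -> R) :
  0 < L ->
  (forall t, 1 <= t <= 2 -> continuous f (s_exp N L t)) ->
  RInt f (s_of_r N (exp L)) (s_of_r N (exp (2 * L)))
  = RInt (fun t => ds_exp N L t * f (s_exp N L t)) 1 2.
Proof.
  intros HL Hf.
  replace (exp L) with (exp (L * 1)) by (f_equal; ring).
  replace (exp (2 * L)) with (exp (L * 2)) by (f_equal; ring).
  symmetry; apply (RInt_comp (V := R_CompleteNormedModule) f (s_exp N L) (ds_exp N L)).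
  - intros t Ht; rewrite Rmin_left, Rmax_right in Ht by lra; now apply Hf.
  - intros t _; split; [apply is_derive_s_of_r_exp | apply continuous_ds_exp].
Qed.

End ExponentialChange.

Lemma exp_profile_log_sqr N r :
  (1 <= N)%nat -> 0 < r -> exp (profile_log N r) ^ 2 * sinh r ^ (N - 1) = r.
Proof.
  intros HN Hr; pose proof (sinh_pos r Hr).
  replace (sinh r ^ (N - 1)) with (exp (ln (sinh r)) ^ (N - 1)) by (rewrite exp_ln; lra).
  transitivity (exp (ln r)); [| now apply exp_ln].
  rewrite <- !exp_mult_INR, <- exp_plus; f_equal.
  unfold profile_log, half_N_minus_1; rewrite minus_INR by exact HN; simpl; field.
Qed.

Lemma rho_s_of_r_weight N r :
  (3 <= N)%nat -> 0 < r ->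
  rho N (s_of_r N r) * s_of_r N r ^ (N - 1) * (s_of_r N r / sinh r) ^ (N - 1) = sinh r ^ (N - 1).
Proof.
  intros HN Hr; pose proof (sinh_pos r Hr); pose proof (s_of_r_pos N r).
  unfold rho; rewrite r_of_s_s_of_r by assumption.
  rewrite pow_sqr, <- !Rpow_mult_distr; f_equal; field; lra.
Qed.

Lemma rellich_defect_test_fun_s_of_r N L A r :
  (3 <= N)%nat -> 0 < L -> 1 < r < exp (3 * L) ->
  (s_of_r N r / sinh r) ^ (N - 1) * rellich_defect N A (test_fun N L) (s_of_r N r)
  = r * profile_lap_factor N L r ^ 2 - (INR N - 1) ^ 4 / 16 * r * bump_at L 0 r ^ 2
    - A * bump_at L 0 r ^ 2 / r.
Proof.
  intros HN HL Hr.
  assert (Hwin : s_of_r N 1 < s_of_r N r < s_of_r N (exp (3 * L)))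
    by (split; apply s_of_r_increasing; auto; lra).
  pose proof (rho_s_of_r_weight N r HN ltac:(lra)) as Hweight.
  pose proof (exp_profile_log_sqr N r ltac:(lia) ltac:(lra)) as Hexp.
  pose proof (sinh_pos r ltac:(lra)) as Hsh; pose proof (s_of_r_pos N r) as Hs.
  unfold rellich_defect, lap_integrand, sqr_integrand, hardy_integrand.
  rewrite (radial_lap_test_fun N L HN HL _ Hwin), (test_fun_window N L _ Hwin).
  rewrite (r_of_s_s_of_r N HN r) by lra; unfold profile.
  set (rh := rho N (s_of_r N r)) in *; set (X := exp (profile_log N r)) in *.
  assert (Hrh : 0 < rh) by (unfold rh, rho; apply pow_lt, Rdiv_lt_0_compat;
                            [apply sinh_pos; rewrite (r_of_s_s_of_r N HN r) |]; lra).
  assert (HX : 0 < X) by apply exp_pos.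
  set (K := (s_of_r N r / sinh r) ^ (N - 1)) in *; set (M := s_of_r N r ^ (N - 1)) in *.
  assert (HK : 0 < K) by (apply pow_lt, Rdiv_lt_0_compat; lra).
  assert (HM : 0 < M) by (apply pow_lt; lra).
  set (Q := profile_lap_factor N L r); set (P := bump_at L 0 r).
  rewrite <- Hweight in Hexp; rewrite <- Hexp.
  field; repeat split; lra.
Qed.

Definition rellich_error_const (m : R) : R :=
  5 + 108 * (m ^ 2 - m) ^ 2 + 108 * m ^ 2 * (m ^ 2 - m) + m ^ 2.

Lemma inv_sqr_le_1 x : 1 <= x -> 0 <= / x ^ 2 <= 1.
Proof.
  intros Hx; split; [left; apply Rinv_0_lt_compat; nra |].
  rewrite <- Rinv_1; apply Rinv_le_contravar; nra.
Qed.

Section DefectBound.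

Variables m A L r p0 p2 sh : R.
Hypothesis Hm : 1 <= m.
Hypothesis HL : 1 <= L.
Hypothesis HLr : L <= r.
Hypothesis Hsh : 1 <= sh.
Hypothesis Hdecay : L * r ^ 2 / sh ^ 2 <= 54.

Let X := p2 / (L ^ 2 * r ^ 2) - p0 / (4 * r ^ 2).
Let Y := (m ^ 2 - m) / sh ^ 2 * p0.

(* Expanding the square, the [m ^ 4] terms cancel against the [(2 m) ^ 4 / 16] term. *)
Lemma lap_factor_sqr_expansion :
  L * r ^ 2 * (X - (m ^ 2 + (m ^ 2 - m) / sh ^ 2) * p0) ^ 2
  - (2 * m) ^ 4 / 16 * L * r ^ 2 * p0 ^ 2 - A * L * p0 ^ 2
  = L * r ^ 2 * (X - Y) ^ 2 - 2 * m ^ 2 * p0 * p2 / L + L * (m ^ 2 / 2 - A) * p0 ^ 2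
    + 2 * m ^ 2 * (m ^ 2 - m) * p0 ^ 2 * (L * r ^ 2 / sh ^ 2).
Proof. unfold X, Y; field; repeat split; lra. Qed.

Lemma scaled_X_sqr_le : L * r ^ 2 * X ^ 2 <= 2 * p2 ^ 2 + p0 ^ 2.
Proof.
  replace (L * r ^ 2 * X ^ 2) with (L / r ^ 2 * (p2 / L ^ 2 - p0 / 4) ^ 2)
    by (unfold X; field; lra).
  assert (HLr2 : 0 <= L / r ^ 2 <= 1).
  { split; [apply Rdiv_le_0_compat; nra |].
    apply Rmult_le_reg_r with (r ^ 2); [nra |].
    unfold Rdiv; rewrite Rmult_assoc, Rinv_l by nra; nra. }
  pose proof (inv_sqr_le_1 L HL) as HinvL.
  assert (Hp2 : (p2 / L ^ 2) ^ 2 <= p2 ^ 2)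
    by (unfold Rdiv; rewrite Rpow_mult_distr; pose proof (pow2_ge_0 p2);
        assert ((/ L ^ 2) ^ 2 <= 1) by nra; nra).
  assert ((p2 / L ^ 2 - p0 / 4) ^ 2 <= 2 * p2 ^ 2 + p0 ^ 2).
  { pose proof (pow2_ge_0 (p2 / L ^ 2 + p0 / 4)); nra. }
  pose proof (pow2_ge_0 (p2 / L ^ 2 - p0 / 4)); nra.
Qed.

Lemma scaled_Y_sqr_le : L * r ^ 2 * Y ^ 2 <= 54 * (m ^ 2 - m) ^ 2 * p0 ^ 2.
Proof.
  replace (L * r ^ 2 * Y ^ 2) with ((m ^ 2 - m) ^ 2 * p0 ^ 2 * (L * r ^ 2 / sh ^ 2) / sh ^ 2)
    by (unfold Y; field; lra).
  assert (H0 : 0 <= (m ^ 2 - m) ^ 2 * p0 ^ 2) by (apply Rmult_le_pos; apply pow2_ge_0).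
  assert (Hd0 : 0 <= L * r ^ 2 / sh ^ 2) by (apply Rdiv_le_0_compat; nra).
  pose proof (inv_sqr_le_1 sh Hsh) as Hinv.
  assert (Had : (m ^ 2 - m) ^ 2 * p0 ^ 2 * (L * r ^ 2 / sh ^ 2) <= 54 * ((m ^ 2 - m) ^ 2 * p0 ^ 2))
    by nra.
  assert (0 <= (m ^ 2 - m) ^ 2 * p0 ^ 2 * (L * r ^ 2 / sh ^ 2)) by nra.
  unfold Rdiv at 2; nra.
Qed.

Lemma lap_factor_sqr_bound :
  L * r ^ 2 * (X - (m ^ 2 + (m ^ 2 - m) / sh ^ 2) * p0) ^ 2
  - (2 * m) ^ 4 / 16 * L * r ^ 2 * p0 ^ 2 - A * L * p0 ^ 2
  <= L * (m ^ 2 / 2 - A) * p0 ^ 2 + rellich_error_const m * (p0 ^ 2 + p2 ^ 2).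
Proof.
  rewrite lap_factor_sqr_expansion.
  pose proof scaled_X_sqr_le; pose proof scaled_Y_sqr_le.
  assert (Hm0 : 0 <= m ^ 2 - m) by nra.
  assert (HXY : L * r ^ 2 * (X - Y) ^ 2 <= 2 * (L * r ^ 2 * X ^ 2) + 2 * (L * r ^ 2 * Y ^ 2)).
  { pose proof (pow2_ge_0 (X + Y)); assert (0 <= L * r ^ 2) by nra; nra. }
  assert (Hcross : - (2 * m ^ 2 * p0 * p2 / L) <= m ^ 2 * (p0 ^ 2 + p2 ^ 2)).
  { assert (Hinv : 0 < / L <= 1)
      by (split; [apply Rinv_0_lt_compat | rewrite <- Rinv_1; apply Rinv_le_contravar]; lra).
    assert (m ^ 2 * (- 2 * p0 * p2) <= m ^ 2 * (p0 ^ 2 + p2 ^ 2))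
      by (apply Rmult_le_compat_l; [nra |]; pose proof (pow2_ge_0 (p0 + p2)); nra).
    replace (- (2 * m ^ 2 * p0 * p2 / L)) with (m ^ 2 * (- 2 * p0 * p2) * / L) by (field; lra).
    assert (0 <= m ^ 2 * (p0 ^ 2 + p2 ^ 2)) by nra; nra. }
  assert (Hlast : 2 * m ^ 2 * (m ^ 2 - m) * p0 ^ 2 * (L * r ^ 2 / sh ^ 2)
                  <= 108 * m ^ 2 * (m ^ 2 - m) * p0 ^ 2).
  { assert (0 <= 2 * m ^ 2 * (m ^ 2 - m) * p0 ^ 2)
      by (apply Rmult_le_pos; [apply Rmult_le_pos |]; nra).
    nra. }
  unfold rellich_error_const.
  assert (0 <= (m ^ 2 - m) ^ 2 * p2 ^ 2) by (apply Rmult_le_pos; apply pow2_ge_0).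
  assert (0 <= m ^ 2 * (m ^ 2 - m) * p2 ^ 2)
    by (apply Rmult_le_pos; [apply Rmult_le_pos |]; nra).
  pose proof (pow2_ge_0 p0); pose proof (pow2_ge_0 p2).
  nra.
Qed.

End DefectBound.

Lemma sinh_large_bounds r : 4 <= r -> 1 <= sinh r /\ r * r ^ 2 / sinh r ^ 2 <= 54.
Proof.
  intros Hr; pose proof (exp_div_4_le_sinh r ltac:(lra)) as Hsh.
  pose proof (exp_ineq1_le r).
  pose proof (pow_div_le_exp (2 * r) 3 ltac:(lra) ltac:(lia)) as Hcube.
  replace (2 * r) with (r + r) in Hcube by ring; rewrite exp_plus in Hcube; simpl INR in Hcube.
  set (E := exp r) in *.
  assert (Hsh2 : E * E / 16 <= sinh r ^ 2) by nra.
  assert (HE2 : 8 * r ^ 3 / 27 <= E * E)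
    by (replace (8 * r ^ 3 / 27) with (((r + r) / (1 + 1 + 1)) ^ 3) by field; lra).
  split; [lra |].
  apply Rmult_le_reg_r with (sinh r ^ 2); [nra |].
  unfold Rdiv; rewrite Rmult_assoc, Rinv_l by nra; nra.
Qed.

Lemma bump_at_exp L k t : 0 < L -> bump_at L k (exp (L * t)) = Derive_n bump k t.
Proof. intros HL; unfold bump_at; rewrite ln_exp; f_equal; field; lra. Qed.

Lemma rellich_defect_exp_le N L A t :
  (3 <= N)%nat -> 3 <= L -> 1 <= t <= 2 ->
  ds_exp N L t * rellich_defect N A (test_fun N L) (s_exp N L t)
  <= L * (half_N_minus_1 N ^ 2 / 2 - A) * bump t ^ 2
     + rellich_error_const (half_N_minus_1 N) * (bump t ^ 2 + Derive_n bump 2 t ^ 2).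
Proof.
  intros HN HL Ht; set (r := exp (L * t)).
  pose proof (exp_window_order L ltac:(lra)) as [He1 [He2 He3]].
  assert (Hr : exp L <= r <= exp (2 * L)) by (unfold r; split; apply exp_le; nra).
  pose proof (exp_ineq1_le L).
  destruct (sinh_large_bounds r ltac:(lra)) as [Hsh Hdecay].
  assert (Hm : 1 <= half_N_minus_1 N)
    by (unfold half_N_minus_1; apply le_INR in HN; simpl in HN; lra).
  unfold ds_exp, s_exp; fold r.
  set (K := (s_of_r N r / sinh r) ^ (N - 1)).
  set (F := rellich_defect N A (test_fun N L) (s_of_r N r)).
  replace (K * (L * r) * F) with (L * r * (K * F)) by ring; unfold K, F.
  rewrite rellich_defect_test_fun_s_of_r by (auto; lra).
  change (bump t) with (Derive_n bump 0 t).
  rewrite <- (bump_at_exp L 0 t), <- (bump_at_exp L 2 t) by lra; fold r.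
  replace (INR N - 1) with (2 * half_N_minus_1 N) by (unfold half_N_minus_1; field).
  eapply Rle_trans; [| apply (lap_factor_sqr_bound (half_N_minus_1 N) A L r _ _ (sinh r)); try lra].
  - unfold profile_lap_factor; right; field; lra.
  - apply Rle_trans with (r * r ^ 2 / sinh r ^ 2); [| exact Hdecay].
    unfold Rdiv; apply Rmult_le_compat_r; [left; apply Rinv_0_lt_compat; nra |].
    apply Rmult_le_compat_r; nra.
Qed.

Section TestFunctionIntegrals.

Variables (N : nat) (L : R).
Hypothesis HN : (3 <= N)%nat.
Hypothesis HL : 0 < L.

Lemma test_window_support z :
  s_of_r N (exp L) <= z <= s_of_r N (exp (2 * L)) -> test_window N L z.
Proof.
  intros Hz; pose proof (exp_window_order L HL) as [He1 [He2 He3]].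
  pose proof (s_of_r_increasing N HN 1 (exp L) ltac:(lra) He1).
  pose proof (s_of_r_increasing N HN (exp (2 * L)) (exp (3 * L)) (exp_pos _) He3).
  unfold test_window; lra.
Qed.

Lemma continuous_integrands_test_fun s :
  test_window N L s ->
  continuous (lap_integrand N (test_fun N L)) s /\
  continuous (sqr_integrand N (test_fun N L)) s /\
  continuous (hardy_integrand N (test_fun N L)) s.
Proof.
  intros Hs; destruct (smooth_on_window_integrands N L HN HL 1) as [H1 [H2 H3]].
  repeat split; apply (derivable_upto_continuous (test_window N L) 1 0); auto.
Qed.

Lemma continuous_rellich_defect_test_fun A s :
  test_window N L s -> continuous (rellich_defect N A (test_fun N L)) s.
Proof.
  intros Hs; destruct (continuous_integrands_test_fun s Hs) as [H1 [H2 H3]].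
  unfold rellich_defect.
  apply (continuous_minus (fun s => _ - _) (fun s => A * _)).
  - apply (continuous_minus _ (fun s => _ * _)); [exact H1 |].
    apply (continuous_scal_r _ (sqr_integrand N (test_fun N L))), H2.
  - apply (continuous_scal_r _ (hardy_integrand N (test_fun N L))), H3.
Qed.

Lemma RInt_rellich_defect_test_fun_nonneg A :
  int_0_oo (lap_integrand N (test_fun N L))
  >= (INR N - 1) ^ 4 / 16 * int_0_oo (sqr_integrand N (test_fun N L))
     + A * int_0_oo (hardy_integrand N (test_fun N L)) ->
  0 <= RInt (rellich_defect N A (test_fun N L)) (s_of_r N (exp L)) (s_of_r N (exp (2 * L))).
Proof.
  intros Hineq; pose proof (exp_window_order L HL) as [He1 [He2 He3]].
  assert (Hs12 : s_of_r N (exp L) < s_of_r N (exp (2 * L)))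
    by (apply s_of_r_increasing; auto; apply exp_pos).
  assert (Hint : forall f : R -> R, (forall s, test_window N L s -> continuous f s) ->
                   ex_RInt f (s_of_r N (exp L)) (s_of_r N (exp (2 * L)))).
  { intros f Hf; apply (ex_RInt_continuous (V := R_CompleteNormedModule)); intros z Hz.
    rewrite Rmin_left, Rmax_right in Hz by lra; apply Hf, test_window_support, Hz. }
  apply RInt_rellich_defect_nonneg; auto; [apply s_of_r_pos | | | |].
  - intros x Hx; apply (locally_open (test_outside N L));
      [apply open_or; [apply open_lt | apply open_gt] | | exact Hx].
    intros y Hy; now apply test_fun_outside.
  - apply Hint; intros s Hs; apply (continuous_integrands_test_fun s Hs).
  - apply Hint; intros s Hs; apply (continuous_integrands_test_fun s Hs).
  - apply Hint; intros s Hs; apply (continuous_integrands_test_fun s Hs).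
Qed.

End TestFunctionIntegrals.

Lemma continuous_Derive_n_bump_sqr k t : continuous (fun t => Derive_n bump k t ^ 2) t.
Proof.
  apply (derivable_upto_continuous (fun _ => True) 1 0); auto.
  apply (derivable_upto_pow _ open_true 1 (Derive_n bump k) 2).
  apply (derivable_upto_Derive_n _ 1 k), (smooth_on_bump _ open_true).
Qed.

Definition bump_sqr_integral : R := RInt (fun t => bump t ^ 2) 1 2.
Definition bump_d2_sqr_integral : R := RInt (fun t => Derive_n bump 2 t ^ 2) 1 2.

Lemma bump_sqr_integral_pos : 0 < bump_sqr_integral.
Proof.
  apply RInt_gt_0; [lra | |]; intros t Ht.
  - apply pow_lt, bump_pos, Ht.
  - apply (continuous_Derive_n_bump_sqr 0).
Qed.

Lemma is_RInt_bump_majorant c D :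
  is_RInt (fun t => c * bump t ^ 2 + D * (bump t ^ 2 + Derive_n bump 2 t ^ 2)) 1 2
          (c * bump_sqr_integral + D * (bump_sqr_integral + bump_d2_sqr_integral)).
Proof.
  assert (Hsq : forall k, is_RInt (fun t => Derive_n bump k t ^ 2) 1 2
                                   (RInt (fun t => Derive_n bump k t ^ 2) 1 2)).
  { intros k; apply (RInt_correct (V := R_CompleteNormedModule)).
    apply (ex_RInt_continuous (V := R_CompleteNormedModule)); intros;
      apply continuous_Derive_n_bump_sqr. }
  apply (is_RInt_plus (V := R_NormedModule) (fun t => c * bump t ^ 2)
           (fun t => D * (bump t ^ 2 + Derive_n bump 2 t ^ 2)));
    apply (is_RInt_scal (V := R_NormedModule)); [exact (Hsq 0%nat) |].
  apply (is_RInt_plus (V := R_NormedModule)); [exact (Hsq 0%nat) | exact (Hsq 2%nat)].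
Qed.

Section ExponentialIntegrals.

Variables (N : nat) (L A : R).
Hypothesis HN : (3 <= N)%nat.
Hypothesis HL : 0 < L.

Lemma test_window_s_exp t : 1 <= t <= 2 -> test_window N L (s_exp N L t).
Proof.
  intros Ht; apply (test_window_support N L HN HL); unfold s_exp.
  split; apply s_of_r_le; auto; try apply exp_pos; apply exp_le; nra.
Qed.

Lemma ex_RInt_rellich_defect_exp :
  ex_RInt (fun t => ds_exp N L t * rellich_defect N A (test_fun N L) (s_exp N L t)) 1 2.
Proof.
  apply (ex_RInt_continuous (V := R_CompleteNormedModule)); intros t Ht.
  rewrite Rmin_left, Rmax_right in Ht by lra.
  apply (continuous_mult (ds_exp N L) (fun t => rellich_defect N A (test_fun N L) (s_exp N L t)));
    [now apply continuous_ds_exp |].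
  apply (continuous_comp (s_exp N L) (rellich_defect N A (test_fun N L)));
    [| now apply continuous_rellich_defect_test_fun, test_window_s_exp].
  apply (ex_derive_continuous (s_exp N L)); eexists; apply is_derive_s_of_r_exp, HN.
Qed.

End ExponentialIntegrals.

Lemma rellich_defect_test_fun_bound N A L :
  (3 <= N)%nat -> 3 <= L ->
  int_0_oo (lap_integrand N (test_fun N L))
  >= (INR N - 1) ^ 4 / 16 * int_0_oo (sqr_integrand N (test_fun N L))
     + A * int_0_oo (hardy_integrand N (test_fun N L)) ->
  0 <= L * (half_N_minus_1 N ^ 2 / 2 - A) * bump_sqr_integral
       + rellich_error_const (half_N_minus_1 N) * (bump_sqr_integral + bump_d2_sqr_integral).
Proof.
  intros HN HL Hineq.
  pose proof (RInt_rellich_defect_test_fun_nonneg N L HN ltac:(lra) A Hineq) as Hpos.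
  rewrite (RInt_s_of_r_exp N L HN _ ltac:(lra)) in Hpos
    by (intros t Ht; apply continuous_rellich_defect_test_fun, test_window_s_exp; auto; lra).
  pose proof (is_RInt_bump_majorant (L * (half_N_minus_1 N ^ 2 / 2 - A))
                (rellich_error_const (half_N_minus_1 N))) as Hmaj.
  rewrite <- (is_RInt_unique _ _ _ _ Hmaj).
  eapply Rle_trans; [exact Hpos |].
  apply RInt_le; [lra | apply ex_RInt_rellich_defect_exp; auto; lra | eexists; exact Hmaj |].
  intros t Ht; apply rellich_defect_exp_le; auto; lra.
Qed.

Lemma le_of_forall_large_nonneg a A K C :
  0 < K -> (forall L, 3 <= L -> 0 <= L * (a - A) * K + C) -> A <= a.
Proof.
  intros HK Hlin; apply Rnot_lt_le; intros HA.
  assert (Hgap : 0 < (A - a) * K) by (apply Rmult_lt_0_compat; lra).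
  set (L := 3 + (Rabs C + 1) / ((A - a) * K)).
  assert (HLgap : (L - 3) * ((A - a) * K) = Rabs C + 1) by (unfold L; field; lra).
  assert (HL : 3 <= L).
  { unfold L; pose proof (Rdiv_le_0_compat (Rabs C + 1) _ ltac:(pose proof (Rabs_pos C); lra) Hgap).
    lra. }
  specialize (Hlin L HL); pose proof (Rle_abs C).
  replace (L * (a - A) * K) with (- ((L - 3) * ((A - a) * K)) - 3 * ((A - a) * K)) in Hlin by ring.
  lra.
Qed.

Theorem proposition6p6 (N : nat) (HN : (5 <= N)%nat) (A : R)
  (Hineq : forall v : R -> R, smooth_cc_pos v ->
     int_0_oo (fun s => / rho N s * (radial_lap N v s) ^ 2 * s ^ (N - 1))
     >= (INR N - 1) ^ 4 / 16 * int_0_oo (fun s => rho N s * (v s) ^ 2 * s ^ (N - 1))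
        + A * int_0_oo (fun s => rho N s / (r_of_s N s) ^ 2 * (v s) ^ 2 * s ^ (N - 1))) :
  A <= (INR N - 1) ^ 2 / 8.
Proof.
  replace ((INR N - 1) ^ 2 / 8) with (half_N_minus_1 N ^ 2 / 2) by (unfold half_N_minus_1; field).
  apply (le_of_forall_large_nonneg _ A bump_sqr_integral
           (rellich_error_const (half_N_minus_1 N) * (bump_sqr_integral + bump_d2_sqr_integral)));
    [apply bump_sqr_integral_pos |].
  intros L HL; apply rellich_defect_test_fun_bound; [lia | exact HL |].
  apply Hineq, smooth_cc_pos_test_fun; [lia | lra].
Qed.
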